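(* Let $(G,M,\Delta)$ be a Garside structure and let $(H,N,\delta)$ be a parabolic substructure of it, with $H\neq\{1\}$. Let $T$ be the set of $(H,N)$-reduced elements of $G$. Then $T$ is a right transversal of $H$ in $G$, i.e. for every right coset $C=H\alpha$ ($\alpha\in G$) the set $C\cap T$ consists of exactly one element.
   Context: Let $G$ be a group and $M$ a submonoid with $M\cap M^{-1}=\{1\}$. Define partial orders on $G$ by $\alpha\le_L\beta$ iff $\alpha^{-1}\beta\in M$, and $\alpha\le_R\beta$ iff $\beta\alpha^{-1}\in M$. For $a\in M$ let $\mathrm{Div}_L(a)=\{b\in M: b\le_L a\}$, $\mathrm{Div}_R(a)=\{b\in M: b\le_R a\}$; $a$ is balanced if these coincide, and then $\mathrm{Div}(a)$ denotes this set. $M$ is Noetherian if each $a\in M$ admits an integer $n$ such that $a$ is not a product of more than $n$ non-trivial factors. A Garside structure $(G,M,\Delta)$ consists of such $G,M$ and a balanced $\Delta\in M$ such that: $M$ is Noetherian; $\mathrm{Div}(\Delta)$ is finite and generates $M$ as a monoid and $G$ as a group; $(G,\le_L)$ is a lattice (with meet $\wedge_L$, join $\vee_L$). A parabolic substructure is a triple $(H,N,\delta)$ where $\delta\in M$ is balanced, $H$ (resp. $N$) is the subgroup of $G$ (resp. submonoid of $M$) generated by $\mathrm{Div}(\delta)$, and $\mathrm{Div}(\delta)=\mathrm{Div}(\Delta)\cap N$. Put $\omega=\delta^{-1}\Delta\in M$. An element $a\in M$ is unmovable if $\Delta\not\le_L a$. Every $\alpha\in G$ has a unique right $\Delta$-form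 $\alpha=a\Delta^p$ with $a\in M$ unmovable and $p\in\mathbb Z$. An element $a\in M$ is $N$-reduced if $a\wedge_L\delta=1$ (equivalently, the only $b\in N$ with $b\le_L a$ is $b=1$). An element $\alpha\in G$ with right $\Delta$-form $a\Delta^p$ is $(H,N)$-reduced if $a$ is $N$-reduced and either $p=0$, or $p<0$ and $\omega\not\le_L a$. *)

From Stdlib Require Import ZArith List.
Import ListNotations.
Set Implicit Arguments.

Record group := Group {
  carrier :> Type;
  mul : carrier -> carrier -> carrier;
  inv : carrier -> carrier;
  one : carrier;
  mulA : forall x y z, mul x (mul y z) = mul (mul x y) z;
  mul1g : forall x, mul one x = x;
  mulg1 : forall x, mul x one = x;
  mulVg : forall x, mul (inv x) x = one;
  mulgV : forall x, mul x (inv x) = one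
}.

Section Garside.
Variable G : group.
Local Notation "x * y" := (mul G x y).
Local Notation "1" := (one G).

Fixpoint npow (x : G) (n : nat) : G :=
  match n with O => 1 | S n => x * npow x n end.
Definition zpow (x : G) (p : Z) : G :=
  match p with
  | Z0 => 1
  | Zpos q => npow x (Pos.to_nat q)
  | Zneg q => inv G (npow x (Pos.to_nat q))
  end.

Definition prodl (l : list G) : G := fold_right (fun x y => x * y) 1 l.

Definition is_submonoid (M : G -> Prop) : Prop :=
  M 1 /\ (forall x y, M x -> M y -> M (x * y)).
Definition pointed (M : G -> Prop) : Prop :=
  forall x, M x -> M (inv G x) -> x = 1.

Definition leL (M : G -> Prop) (a b : G) : Prop := M (inv G a * b).
Definition leR (M : G -> Prop) (a b : G) : Prop := M (b * inv G a).

Definition DivL (M : G -> Prop) (a b : G) : Prop := M b /\ leL M b a.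
Definition DivR (M : G -> Prop) (a b : G) : Prop := M b /\ leR M b a.

Definition balanced (M : G -> Prop) (a : G) : Prop :=
  M a /\ forall b, DivL M a b <-> DivR M a b.
Definition Div (M : G -> Prop) (a : G) : G -> Prop := DivL M a.

Definition noetherian (M : G -> Prop) : Prop :=
  forall a, M a -> exists n : nat, forall l : list G,
    (forall x, In x l -> M x /\ x <> 1) -> prodl l = a -> length l <= n.

Inductive gen_monoid (S : G -> Prop) : G -> Prop :=
  | gm_base x : S x -> gen_monoid S x
  | gm_one : gen_monoid S 1
  | gm_mul x y : gen_monoid S x -> gen_monoid S y -> gen_monoid S (x * y).

Inductive gen_group (S : G -> Prop) : G -> Prop :=
  | gg_base x : S x -> gen_group S x
  | gg_one : gen_group S 1
  | gg_mul x y : gen_group S x -> gen_group S y -> gen_group S (x * y)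
  | gg_inv x : gen_group S x -> gen_group S (inv G x).

Definition finite_set (S : G -> Prop) : Prop :=
  exists l : list G, forall x, S x -> In x l.

Definition is_meet (le : G -> G -> Prop) (a b m : G) : Prop :=
  le m a /\ le m b /\ forall c, le c a -> le c b -> le c m.
Definition is_join (le : G -> G -> Prop) (a b j : G) : Prop :=
  le a j /\ le b j /\ forall c, le a c -> le b c -> le j c.
Definition lattice (le : G -> G -> Prop) : Prop :=
  forall a b, (exists m, is_meet le a b m) /\ (exists j, is_join le a b j).

Definition garside (M : G -> Prop) (Delta : G) : Prop :=
  is_submonoid M /\ pointed M /\ balanced M Delta /\
  noetherian M /\
  finite_set (Div M Delta) /\
  (forall x, M x <-> gen_monoid (Div M Delta) x) /\
  (forall x, gen_group (Div M Delta) x) /\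
  lattice (leL M).

Definition parabolic (M : G -> Prop) (Delta delta : G) : Prop :=
  balanced M delta /\
  forall b, Div M delta b <-> (Div M Delta b /\ gen_monoid (Div M delta) b).

Definition Hsub (M : G -> Prop) (delta : G) : G -> Prop := gen_group (Div M delta).
Definition Nsub (M : G -> Prop) (delta : G) : G -> Prop := gen_monoid (Div M delta).

Definition unmovable (M : G -> Prop) (Delta a : G) : Prop := ~ leL M Delta a.

Definition N_reduced (M : G -> Prop) (delta a : G) : Prop :=
  is_meet (leL M) a delta 1.

(* alpha = a Delta^p is the right Delta-form (unique), and the conditions hold *)
Definition HN_reduced (M : G -> Prop) (Delta delta alpha : G) : Prop :=
  exists (a : G) (p : Z),
    M a /\ unmovable M Delta a /\ alpha = a * zpow Delta p /\
    N_reduced M delta a /\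
    (p = 0%Z \/ ((p < 0)%Z /\ ~ leL M (inv G delta * Delta) a)).

End Garside.
Arguments garside {G}.
Arguments parabolic {G}.
Arguments Hsub {G}.
Arguments HN_reduced {G}.

(* Write alpha = m Delta^-n with m in M.  By Noetherianity every m in M
   factors as x a with x in N and a N-reduced, and, using joins inside
   Div(delta), a divisor b of delta with b <= x a already satisfies
   b^-1 x in N; so N-parts can be cancelled on the left of x a.
   Existence, by induction on n: if Delta <= m, or if omega <= a, one factor
   Delta^-1 is absorbed into m (the leftover factor delta^-1 x lies in H);
   otherwise a Delta^-n is reduced (delta <> 1 makes a unmovable).
   Uniqueness: two reduced a Delta^-k, a' Delta^-k' (k' <= k) in one coset
   give a' Delta^(k-k') = x a with x in N.  For k = k', x <= a' forces x = 1;
   for k > k', Delta <= x a forces omega <= a, because omega <= c m implies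
   omega <= m for c in N: omega and omega^-1 c omega have no nontrivial
   common right divisor. *)

From Stdlib Require Import ZArith List Lia Classical.
From Corelib Require Import ssreflect.
Import ListNotations.
Set Implicit Arguments.
Unset Strict Implicit.

Section GroupFacts.
Variable G : group.
Local Notation "x * y" := (mul G x y).
Local Notation "1" := (one G).
Local Notation inv := (inv G).

Lemma mulKg (x y : G) : inv x * (x * y) = y.
Proof. by rewrite mulA mulVg mul1g. Qed.

Lemma mulKVg (x y : G) : x * (inv x * y) = y.
Proof. by rewrite mulA mulgV mul1g. Qed.

Lemma invg_unique (x y : G) : x * y = 1 -> inv x = y.
Proof. by move=> e; rewrite -(mulg1 _ (inv x)) -e mulKg. Qed.

Lemma invMg (x y : G) : inv (x * y) = inv y * inv x.
Proof. by apply: invg_unique; rewrite -mulA mulKVg mulgV. Qed.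

Lemma invgK (x : G) : inv (inv x) = x.
Proof. exact/invg_unique/mulVg. Qed.

Lemma invg1 : inv 1 = 1.
Proof. exact/invg_unique/mul1g. Qed.

Lemma npowD (x : G) i j : npow G x (i + j) = npow G x i * npow G x j.
Proof. by elim: i => [|i IH] /=; rewrite ?mul1g // IH mulA. Qed.

Lemma npowSr (x : G) n : npow G x (S n) = npow G x n * x.
Proof. by rewrite -Nat.add_1_r npowD /= mulg1. Qed.

Lemma npow_closed (P : G -> Prop) (x : G) :
  P 1 -> (forall y z, P y -> P z -> P (y * z)) -> P x -> forall n, P (npow G x n).
Proof. by move=> P1 PM Px; elim=> [| n IH] //=; apply: PM. Qed.

End GroupFacts.

Ltac gsimpl :=
  repeat progress rewrite ?invMg ?invgK ?invg1 ?mul1g ?mulg1 -?mulA ?mulKVg ?mulKg ?mulgV ?mulVg.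

(* Only the last argument of the goal's predicate is rewritten, so [leL] goals
   must be unfolded first. *)
Ltac gconv H :=
  lazymatch goal with |- ?P _ => apply: (eq_ind _ P H); by gsimpl end.

Section Generated.
Variables (G : group) (S : G -> Prop).
Local Notation "x * y" := (mul G x y).
Local Notation "1" := (one G).
Local Notation inv := (inv G).

Lemma gen_monoid_indl (P : G -> Prop) :
  P 1 -> (forall s x, S s -> gen_monoid G S x -> P x -> P (s * x)) ->
  forall x, gen_monoid G S x -> P x.
Proof.
  move=> P1 PS x hx.
  suff PxM : forall y, gen_monoid G S y -> P y -> P (x * y).
    by rewrite -(mulg1 _ x); apply: PxM (gm_one _ _) P1.
  elim: hx => [s hs | | x1 x2 _ IH1 hx2 IH2] y hy Py.
  - exact: PS.
  - by rewrite mul1g.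
  - by rewrite -mulA; apply: IH1 (gm_mul hx2 hy) (IH2 _ hy Py).
Qed.

Lemma gen_group_mul_closed (P : G -> Prop) :
  P 1 -> (forall s, S s -> P s /\ P (inv s)) -> (forall x y, P x -> P y -> P (x * y)) ->
  forall x, gen_group G S x -> P x.
Proof.
  move=> P1 PS PM; suff PV : forall x, gen_group G S x -> P x /\ P (inv x).
    by move=> x /PV [].
  move=> x; elim=> [s /PS // | | y z _ [Py Py'] _ [Pz Pz'] | y _ [Py Py']].
  - by rewrite invg1.
  - by rewrite invMg; split; apply: PM.
  - by rewrite invgK.
Qed.

Lemma gen_monoid_min (P : G -> Prop) :
  (forall s, S s -> P s) -> is_submonoid G P -> forall x, gen_monoid G S x -> P x.
Proof.
  move=> PS [P1 PM] x; elim=> [s /PS // | // | y z _ Py _ Pz].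
  exact: PM Py Pz.
Qed.

Lemma gen_monoid_group x : gen_monoid G S x -> gen_group G S x.
Proof. by elim=> *; [apply: gg_base | apply: gg_one | apply: gg_mul]. Qed.

Lemma gen_monoid_conj (e : G) :
  (forall s, S s -> S (e * (s * inv e))) ->
  forall x, gen_monoid G S x -> gen_monoid G S (e * (x * inv e)).
Proof.
  move=> Se x; elim=> [s /Se /gm_base // | | y z _ hy _ hz].
  - by rewrite mul1g mulgV; apply: gm_one.
  - by gconv (gm_mul hy hz).
Qed.

End Generated.

Section LeftOrder.
Variables (G : group) (M : G -> Prop).
Hypotheses (M1 : M (one G)) (MM : forall x y, M x -> M y -> M (mul G x y)).
Hypothesis Mpt : pointed G M.
Local Notation "x * y" := (mul G x y).
Local Notation "1" := (one G).
Local Notation inv := (inv G).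
Local Notation le := (leL G M).

Lemma leLL x : le x x.
Proof. by rewrite /leL mulVg. Qed.

Lemma leL_trans x y z : le x y -> le y z -> le x z.
Proof. by rewrite /leL => hxy hyz; gconv (MM hxy hyz). Qed.

Lemma leL_mul2l z x y : le (z * x) (z * y) <-> le x y.
Proof. by rewrite /leL; gsimpl. Qed.

Lemma leL_mulr x m : M m -> le x (x * m).
Proof. by rewrite /leL mulKg. Qed.

Lemma leL1 x : M x -> le 1 x.
Proof. by rewrite /leL invg1 mul1g. Qed.

Lemma leL1_eq1 b : M b -> le b 1 -> b = 1.
Proof. by rewrite /leL mulg1 => Mb; apply: Mpt. Qed.

Lemma noetherian_ind (P : G -> Prop) : noetherian G M ->
  (forall m, M m -> (forall b, M b -> b <> 1 -> le b m -> P (inv b * m)) -> P m) ->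
  forall m, M m -> P m.
Proof.
  move=> Mnoeth IH m Mm; case: (Mnoeth m Mm) => n.
  elim: n m Mm => [|n IHn] m Mm bound_m; apply: (IH _ Mm) => b Mb b_neq1 hbm.
  - have m_neq1 : m <> 1 by move=> e; apply: b_neq1; apply: leL1_eq1; rewrite -?e.
    have /= : length [m] <= 0.
      by apply: bound_m; [move=> x [<- | []]; split | rewrite /= mulg1].
    lia.
  - apply: IHn hbm _ => l hl el.
    have /= : length (b :: l) <= S n.
      apply: bound_m; last by rewrite /= el mulKVg.
      by move=> x [<- | /hl]; first split.
    lia.
Qed.

End LeftOrder.

Section BalancedElement.
Variables (G : group) (M : G -> Prop) (a : G).
Hypothesis bal_a : balanced G M a.
Local Notation "x * y" := (mul G x y).
Local Notation "1" := (one G).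
Local Notation inv := (inv G).
Local Notation S := (Div G M a).
Local Notation apow := (npow G a).

Lemma Div_ldiv_compl b : S b -> S (inv b * a).
Proof.
  case: bal_a => _ DivLR [Mb hba]; apply/DivLR.
  by split=> //; rewrite /leR; gconv Mb.
Qed.

Lemma Div_rdiv_compl b : S b -> S (a * inv b).
Proof.
  case: bal_a => _ DivLR /DivLR [Mb hba].
  by split=> //; rewrite /leL; gconv Mb.
Qed.

Lemma Div_conj b : S b -> S (a * (b * inv a)).
Proof. by move=> /Div_rdiv_compl /Div_rdiv_compl hb; gconv hb. Qed.

Lemma Div_conjV b : S b -> S (inv a * (b * a)).
Proof. by move=> /Div_ldiv_compl /Div_ldiv_compl hb; gconv hb. Qed.

Lemma gen_Div_conj_pow j x :
  gen_monoid G S x -> gen_monoid G S (apow j * (x * inv (apow j))).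
Proof.
  elim: j x => [|j IH] x hx /=; first by gconv hx.
  by gconv (gen_monoid_conj Div_conj (IH x hx)).
Qed.

Lemma gen_Div_conjV_pow j x :
  gen_monoid G S x -> gen_monoid G S (inv (apow j) * (x * apow j)).
Proof.
  have conjV s : S s -> S (inv a * (s * inv (inv a))) by move=> /Div_conjV hs; gconv hs.
  elim: j x => [|j IH] x hx /=; first by gconv hx.
  by gconv (IH _ (gen_monoid_conj conjV hx)).
Qed.

Lemma gen_group_Div_left_frac y :
  gen_group G S y -> exists j x, gen_monoid G S x /\ y = inv (apow j) * x.
Proof.
  move: y; apply: gen_group_mul_closed.
  - by exists 0, 1; split; [apply: gm_one | gsimpl].
  - move=> s hs; split.
    + by exists 0, s; split; [apply: gm_base | gsimpl].
    + exists 1%nat, (a * inv s); split; first exact/gm_base/Div_rdiv_compl.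
      by rewrite /=; gsimpl.
  - move=> _ _ [i [x [hx ->]]] [j [z [hz ->]]].
    exists (j + i), (apow j * (x * inv (apow j)) * z).
    split; first exact: gm_mul (gen_Div_conj_pow j hx) hz.
    by rewrite npowD; gsimpl.
Qed.

Lemma gen_group_Div_right_frac y :
  gen_group G S y -> exists x j, gen_monoid G S x /\ y = x * inv (apow j).
Proof.
  move=> /gen_group_Div_left_frac [j [x [hx ->]]].
  exists (inv (apow j) * (x * apow j)), j.
  by split; [apply: gen_Div_conjV_pow | gsimpl].
Qed.

End BalancedElement.

Section ParabolicSubstructure.
Variables (G : group) (M : G -> Prop) (D d : G).
Hypotheses (M1 : M (one G)) (MM : forall x y, M x -> M y -> M (mul G x y)).
Hypothesis Mpt : pointed G M.
Hypothesis Mnoeth : noetherian G M.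
Hypothesis HD : balanced G M D.
Hypothesis M_gen : forall x, M x <-> gen_monoid G (Div G M D) x.
Hypothesis G_gen : forall x, gen_group G (Div G M D) x.
Hypothesis Mlat : lattice G (leL G M).
Hypothesis Hd : balanced G M d.
Hypothesis Hpar : forall b, Div G M d b <-> Div G M D b /\ gen_monoid G (Div G M d) b.

Local Notation "x * y" := (mul G x y).
Local Notation "1" := (one G).
Local Notation inv := (inv G).
Local Notation le := (leL G M).
Local Notation Dd := (Div G M d).
Local Notation N := (gen_monoid G Dd).
Local Notation H := (gen_group G Dd).
Local Notation Nred := (N_reduced G M d).
Local Notation om := (inv d * D).
Local Notation psi z := (inv om * (z * om)).

Lemma N_M x : N x -> M x.
Proof. by apply: gen_monoid_min => [s [] |]. Qed.

Lemma Dd_d : Dd d.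
Proof. by split; [apply: (proj1 Hd) | apply: leLL]. Qed.

Lemma d_le_D : le d D.
Proof. by case/Hpar: Dd_d => [[]]. Qed.

Lemma M_conjD x : M x -> M (D * (x * inv D)).
Proof.
  by move=> /M_gen hx; apply/M_gen; apply: gen_monoid_conj (Div_conj HD) _ hx.
Qed.

Lemma M_conjVD x : M x -> M (inv D * (x * D)).
Proof.
  move=> /M_gen /(gen_Div_conjV_pow HD 1) /= hx; apply/M_gen; gconv hx.
Qed.

Lemma Delta_le_mull x a : M x -> le D a -> le D (x * a).
Proof. by rewrite /leL => /M_conjVD Mx hDa; gconv (MM Mx hDa). Qed.

Lemma Dd_join b c : Dd b -> Dd c ->
  exists j, Dd j /\ le b j /\ le c j /\ forall z, le b z -> le c z -> le j z.
Proof.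
  move=> [Mb hbd] [_ hcd]; case: (Mlat b c) => _ [j [hbj [hcj jmin]]].
  exists j; split=> //; split; last exact: jmin.
  by have := leL_trans MM (leL1 Mb) hbj; rewrite /leL invg1 mul1g.
Qed.

Lemma Dd_ldiv b c : Dd b -> Dd c -> le b c -> Dd (inv b * c).
Proof.
  move=> hb [_ hcd] hbc; split=> //.
  apply: (leL_trans MM (y := inv b * d)); first exact/leL_mul2l.
  by case: (Div_ldiv_compl Hd hb).
Qed.

Lemma N_reduced_div1 a b : Nred a -> M b -> le b a -> le b d -> b = 1.
Proof. by move=> [_ [_ Ha]] Mb hba hbd; apply: (leL1_eq1 Mpt Mb); apply: Ha. Qed.

Lemma N_reducedI a : M a -> (forall b, M b -> le b a -> le b d -> b = 1) -> Nred a.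
Proof.
  move=> Ma Ha; split; first exact: leL1.
  split; first exact: leL1 (proj1 Hd).
  case: (Mlat a d) => [[m [hma [hmd mmax]]] _] c hca hcd.
  have m1 : m = 1.
    apply: Ha hma hmd.
    by have := mmax _ (leL1 Ma) (leL1 (proj1 Hd)); rewrite /leL invg1 mul1g.
  by rewrite -m1; apply: mmax.
Qed.

Lemma N_ldiv_of_le_mul b x a :
  Dd b -> N x -> M a -> Nred a -> le b (x * a) -> N (inv b * x).
Proof.
  move=> + hx Ma Ha; elim/gen_monoid_indl: x / hx b => [| s x hs hx IH] b hb.
  - rewrite mul1g => hba; rewrite (N_reduced_div1 Ha (proj1 hb) hba (proj2 hb)).
    by gsimpl; apply: gm_one.
  - move=> hbsxa.
    have [j [hj [hbj [hsj jmin]]]] := Dd_join hb hs.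
    have hjsxa : le j (s * (x * a)).
      by apply: jmin; [rewrite mulA | apply: leL_mulr; apply: MM (N_M hx) Ma].
    have hsj' : Dd (inv s * j) := Dd_ldiv hs hj hsj.
    have /IH IHj : le (inv s * j) (x * a) by apply/(leL_mul2l _ s); rewrite mulKVg.
    by gconv (gm_mul (gm_base _ _ _ (Dd_ldiv hb hj hbj)) (IHj hsj')).
Qed.

Lemma N_cancel_left y u x a :
  N y -> N x -> M u -> M a -> Nred a -> y * u = x * a -> exists x', N x' /\ u = x' * a.
Proof.
  move=> hy + Mu Ma Ha; elim/gen_monoid_indl: y / hy x => [| s y hs hy IH] x hx.
  - by rewrite mul1g => ->; exists x.
  - move=> e; apply: (IH (inv s * x)).
    + apply: N_ldiv_of_le_mul hs hx Ma Ha _.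
      by rewrite -e -mulA; apply: leL_mulr; apply: MM (N_M hy) Mu.
    + by rewrite -mulA -e; gsimpl.
Qed.

Lemma N_le_reduced_eq1 x a : N x -> M a -> Nred a -> le x a -> x = 1.
Proof.
  move=> hx Ma Ha hxa.
  have xa : x * (inv x * a) = 1 * a by rewrite mulKVg mul1g.
  have [x' [hx' e]] := N_cancel_left hx (gm_one _ _) hxa Ma Ha xa.
  have x'E : x' = inv x by move: (f_equal (fun z => z * inv a) e) => /=; gsimpl.
  by apply: Mpt (N_M hx) _; rewrite -x'E; apply: N_M.
Qed.

Lemma psi_M z : N z -> M (psi z).
Proof.
  move=> /(gen_monoid_conj (Div_conj Hd)) /N_M /M_conjVD hz; gconv hz.
Qed.

Lemma omega_psi_rcoprime c b :
  Dd c -> M b -> leR G M b om -> leR G M b (psi c) -> b = 1.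
Proof.
  rewrite /leR => hc Mb hbom hbpsi.
  set b' := D * (b * inv D).
  have Mb' : M b' := M_conjD Mb.
  have hb' : Dd b'.
    apply/(proj2 Hd); split=> //; rewrite /leR.
    have := MM (psi_M (gm_base _ _ _ (Div_rdiv_compl Hd hc))) hbpsi.
    by move=> /M_conjD h; gconv h.
  have hb'd : Dd (b' * d).
    apply/Hpar; split; last exact: gm_mul (gm_base _ _ _ hb') (gm_base _ _ _ Dd_d).
    by split; [apply: MM Mb' (proj1 Hd) | rewrite /leL; gconv hbom].
  have b'd1 : inv d * (b' * d) = 1.
    apply: Mpt; first by case: (Div_conjV Hd hb').
    by case: hb'd => _; rewrite /leL => h; gconv h.
  have -> : b = inv D * (d * ((inv d * (b' * d)) * inv d) * D) by rewrite /b'; gsimpl.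
  by rewrite b'd1; gsimpl.
Qed.

Lemma omega_le_Div_mul c m : Dd c -> M m -> le om (c * m) -> le om m.
Proof.
  move=> hc Mm hcm.
  have Mpsi := psi_M (gm_base _ _ _ hc).
  case: (Mlat (inv om) (inv (psi c))) => _ [J [hJom [hJpsi Jmin]]].
  have J1 : le J 1 by apply: Jmin; rewrite /leL; [gconv d_le_D | gconv Mpsi].
  have Jm : le J (inv om * m) by apply: Jmin; rewrite /leL; [gconv Mm | gconv hcm].
  have invJ1 : inv J = 1.
    apply: (omega_psi_rcoprime hc); rewrite /leR; [gconv J1 | gconv hJom | gconv hJpsi].
  by move: Jm; rewrite /leL invJ1 mul1g.
Qed.

Lemma omega_le_N_mul x m : N x -> M m -> le om (x * m) -> le om m.
Proof.
  move=> hx; elim/gen_monoid_indl: x / hx m => [| s x hs hx IH] m Mm; first by rewrite mul1g.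
  by rewrite -mulA => /(omega_le_Div_mul hs (MM (N_M hx) Mm)); apply: IH.
Qed.

Lemma omega_le_of_Delta_le x a : N x -> M a -> Nred a -> le D (x * a) -> le om a.
Proof.
  move=> hx Ma Ha hDxa.
  have hdx := N_ldiv_of_le_mul Dd_d hx Ma Ha (leL_trans MM d_le_D hDxa).
  by apply: omega_le_N_mul hdx Ma _; rewrite /leL; gconv hDxa.
Qed.

Lemma N_reduced_decomp m : M m -> exists x a, N x /\ M a /\ Nred a /\ m = x * a.
Proof.
  move: m; apply: (noetherian_ind Mpt Mnoeth) => m Mm IH.
  case: (classic (exists b, M b /\ b <> 1 /\ le b m /\ le b d)).
  - move=> [b [Mb [b_neq1 [hbm hbd]]]].
    have [x [a [hx [Ma [Ha e]]]]] := IH b Mb b_neq1 hbm.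
    exists (b * x), a; split; first exact: gm_mul (gm_base _ _ _ (conj Mb hbd)) hx.
    by split=> //; split=> //; rewrite -mulA -e mulKVg.
  - move=> no_div; exists 1, m; split; first exact: gm_one.
    split=> //; split; last by rewrite mul1g.
    apply: N_reducedI Mm _ => b Mb hbm hbd; apply: NNPP => b_neq1.
    by apply: no_div; exists b.
Qed.

Lemma N_reduced_unmovable a : d <> 1 -> Nred a -> unmovable G M D a.
Proof.
  move=> d_neq1 Ha hDa; apply: d_neq1.
  exact: N_reduced_div1 Ha (proj1 Hd) (leL_trans MM d_le_D hDa) (leLL M1 d).
Qed.

Lemma delta_neq1 : (exists h, H h /\ h <> 1) -> d <> 1.
Proof.
  move=> [h [hh h_neq1]] d1; apply: h_neq1; move: h hh.
  apply: gen_group_mul_closed => [// | s [Ms hsd] | x y -> ->]; last by rewrite mul1g.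
  have s1 : s = 1 by apply: (leL1_eq1 Mpt Ms); rewrite -d1.
  by rewrite s1 invg1.
Qed.

Definition reduced_form (t a : G) (k : nat) : Prop :=
  M a /\ unmovable G M D a /\ Nred a /\ t = a * inv (npow G D k) /\ (k = 0 \/ ~ le om a).

Lemma HN_reducedE t : HN_reduced M D d t <-> exists a k, reduced_form t a k.
Proof.
  split.
  - move=> [a [p [Ma [ua [-> [Ha hp]]]]]].
    case: hp => [-> | [p_lt0 hom]].
    + exists a, 0; do 3 (split=> //).
      by split; [rewrite /= invg1 | left].
    + case: p p_lt0 hom => [| q | q] p_lt0 hom; try lia.
      by exists a, (Pos.to_nat q); do 4 (split=> //); right.
  - move=> [a [[| k] [Ma [ua [Ha [-> hk]]]]]].
    + exists a, 0%Z; do 2 (split=> //).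
      by split; [rewrite /= invg1 | split=> //; left].
    + exists a, (Zneg (Pos.of_succ_nat k)); do 2 (split=> //).
      split; first by rewrite /zpow SuccNat2Pos.id_succ.
      by split=> //; right; split; [lia | case: hk].
Qed.

Lemma reduced_form_exists n m : d <> 1 -> M m ->
  exists t a k, reduced_form t a k /\ H (t * inv (m * inv (npow G D n))).
Proof.
  move=> d_neq1; elim: n m => [| n IH] m Mm.
  - have [x [a [hx [Ma [Ha ->]]]]] := N_reduced_decomp Mm.
    exists a, a, 0; split.
      split=> //; split; first exact: N_reduced_unmovable.
      by do 2 (split=> //); [rewrite /= invg1 mulg1 | left].
    by rewrite /= invg1 mulg1; gconv (gg_inv (gen_monoid_group hx)).
  - rewrite npowSr; have [hDm | hDm] := classic (le D m).
    + have [t [a [k [R Ht]]]] := IH _ (M_conjD hDm).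
      by exists t, a, k; split=> //; gconv Ht.
    + have [x [a [hx [Ma [Ha e]]]]] := N_reduced_decomp Mm.
      have ua : ~ le D a by move=> /(Delta_le_mull (N_M hx)); rewrite -e.
      have [hom | hom] := classic (le om a).
      * have [t [a' [k [R Ht]]]] := IH _ (M_conjD hom).
        exists t, a', k; split=> //; rewrite e.
        by gconv (gg_mul Ht (gg_mul (gg_base _ _ _ Dd_d) (gg_inv (gen_monoid_group hx)))).
      * exists (a * inv (npow G D (S n))), a, (S n); split.
          by do 4 (split=> //); right.
        by rewrite e npowSr; gconv (gg_inv (gen_monoid_group hx)).
Qed.

Lemma reduced_form_unique t a k t' a' k' :
  reduced_form t a k -> reduced_form t' a' k' -> H (t' * inv t) -> t' = t.
Proof.
  wlog hk : t a k t' a' k' / k' <= k.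
    move=> wlog R R' h; have [hk | hk] := Nat.le_ge_cases k' k; first exact: wlog R R' h.
    by symmetry; apply: (wlog t' a' k' t a k hk R' R); gconv (gg_inv h).
  have [l ->] : exists l, k = k' + l by exists (k - k'); lia.
  move=> [Ma [_ [Ha [-> hk0]]]] [Ma' [_ [Ha' [-> _]]]].
  move=> /(gen_group_Div_left_frac Hd) [j [x [hx e]]].
  have {e} E : npow G d j * (a' * npow G D l) = x * a.
    move: e; rewrite npowD; gsimpl => e.
    have -> : x = npow G d j * (a' * (npow G D l * inv a)) by rewrite e mulKVg.
    by gsimpl.
  have Nd := npow_closed (gm_one _ _) (@gm_mul _ _) (gm_base _ _ _ Dd_d) j.
  have MD := npow_closed M1 MM (proj1 HD) l.
  have [x1 [hx1 e1]] := N_cancel_left Nd hx (MM Ma' MD) Ma Ha E.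
  case: l E e1 hk0 MD => [| l] E e1 hk0 MD.
  - rewrite /= mulg1 in e1.
    have x1_1 : x1 = 1 by apply: N_le_reduced_eq1 hx1 Ma' Ha' _; rewrite /leL e1 mulKg.
    by rewrite e1 x1_1 mul1g Nat.add_0_r.
  - case: hk0 => [| hom]; first lia.
    exfalso; apply: hom; apply: omega_le_of_Delta_le hx1 Ma Ha _.
    rewrite -e1 /=; apply: Delta_le_mull Ma' _; apply: leL_mulr.
    exact: npow_closed M1 MM (proj1 HD) l.
Qed.

Lemma HN_reduced_transversal : (exists h, H h /\ h <> 1) ->
  forall alpha, exists t, (HN_reduced M D d t /\ H (t * inv alpha)) /\
    forall t', HN_reduced M D d t' -> H (t' * inv alpha) -> t' = t.
Proof.
  move=> H_nontriv alpha.
  have [m [n [/M_gen Mm ->]]] := gen_group_Div_right_frac HD (G_gen alpha).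
  have [t [a [k [R Ht]]]] := reduced_form_exists n (delta_neq1 H_nontriv) Mm.
  exists t; split; first by split=> //; apply/HN_reducedE; exists a, k.
  move=> t' /HN_reducedE [a' [k' R']] Ht'.
  by apply: reduced_form_unique R R' _; gconv (gg_mul Ht' (gg_inv Ht)).
Qed.

End ParabolicSubstructure.

Unset Implicit Arguments.

Theorem theorem3p3 (G : group) (M : G -> Prop) (Delta delta : G) :
  garside M Delta ->
  parabolic M Delta delta ->
  (exists h : G, Hsub M delta h /\ h <> one G) ->
  forall alpha : G,
    exists t : G,
      (HN_reduced M Delta delta t /\ Hsub M delta (mul G t (inv G alpha))) /\
      forall t' : G,
        HN_reduced M Delta delta t' -> Hsub M delta (mul G t' (inv G alpha)) ->
        t' = t.
Proof.
  move=> [[M1 MM] [Mpt [HD [Mnoeth [_ [M_gen [G_gen Mlat]]]]]]] [Hd Hpar].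
  exact: HN_reduced_transversal M1 MM Mpt Mnoeth HD M_gen G_gen Mlat Hd Hpar.
Qed.
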